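(* Assume that the constants $\lambda_R>0$, $\delta \geq 0$, $\Delta_T \geq 0$, $\Delta_\alpha \geq 0$, and $C>0$ are such that the conditions listed in the context hold for the solution $\bar{\alpha}^s$, $\bar{\alpha}^t$, $\bar{T}$ of Problem 3. Then the difference between the rates of variation of the estimated source and target label functions $f^s = \bar{U}^s \bar{\alpha}^s$ and $f^t = \bar{U}^t \bar{T} \bar{\alpha}^t$ on the source and target graphs is bounded as \[ | (f^s)^T L^s f^s - (f^t)^T L^t f^t | \leq C^2 \delta + 2 C \lambda_R \Delta_\alpha + C^2 \lambda_R ( 2 \Delta_T + \Delta_T^2 ). \]
   Context: A source graph with $N_s$ nodes has graph Laplacian $L^s$ and a target graph with $N_t$ nodes has graph Laplacian $L^t$ (Laplacian $L=D-W$ with $W$ the weight matrix and $D$ the diagonal degree matrix). Let $0=\lambda_1^s \leq \dots \leq \lambda_R^s$ and $0=\lambda_1^t \leq \dots \leq \lambda_R^t$ be the $R$ smallest eigenvalues of $L^s$ and $L^t$, with $R<N_s$, $R<N_t$, and let $\bar{U}^s \in \mathbb{R}^{N_s \times R}$, $\bar{U}^t \in \mathbb{R}^{N_t \times R}$ contain the corresponding orthonormal eigenvectors (reduced graph Fourier bases). Problem 3 is \[ \min_{\bar{\alpha}^s, \bar{\alpha}^t, \bar{T}} \| S^s \bar{U}^s \bar{\alpha}^s - y^s \|^2 + \| S^t \bar{U}^t \bar{T} \bar{\alpha}^t - y^t \|^2 + \mu_1 \| \bar{\alpha}^s - \bar{\alpha}^t \|^2 + \mu_2 \| \bar{M} \odot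 \bar{T} \|_F^2 \] subject to $\sum_{i=1}^{R} \bar{T}_{ij}^2 = 1$ for $j=1,\dots,R$, where $S^s, S^t$ are binary selection matrices picking out labeled nodes, $y^s, y^t$ the known labels, $\bar{M}_{ij}=\exp((i-j)^2/\sigma^2)$, $\odot$ the Hadamard product, $\mu_1,\mu_2>0$, $\bar{T}\in\mathbb{R}^{R\times R}$. Conditions assumed for the solution: $| \lambda_i^s - \lambda_i^t | \leq \delta$ for all $i=1,\dots,R$; $\lambda_R = \max(\lambda_R^s, \lambda_R^t)$; $\| \bar{\alpha}^s - \bar{\alpha}^t \| \leq \Delta_\alpha$; $\| \bar{T} - I \| \leq \Delta_T$ where $I$ is the $R\times R$ identity and $\|\cdot\|$ denotes the operator norm for matrices; and $\| \bar{\alpha}^s \|, \| \bar{\alpha}^t \| \leq C$. *)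

From HB Require Import structures.
From mathcomp Require Import all_boot all_order all_algebra.
From mathcomp Require Import all_classical all_reals all_analysis.
Set Implicit Arguments. Unset Strict Implicit. Unset Printing Implicit Defensive.
Import Order.TTheory GRing.Theory Num.Theory.
Local Open Scope ring_scope.
Local Open Scope classical_set_scope.

Section Defs.
Variable R : realType.

Definition vnorm n (x : 'cV[R]_n) : R := Num.sqrt (\sum_i (x i 0) ^+ 2).

Definition frob2 m n (A : 'M[R]_(m, n)) : R := \sum_i \sum_j (A i j) ^+ 2.

Definition opnorm m n (A : 'M[R]_(m, n)) : R :=
  sup [set vnorm (A *m x) | x in [set x : 'cV[R]_n | vnorm x <= 1]].

Definition laplacian N (W : 'M[R]_N) : 'M[R]_N :=
  diag_mx (\row_i \sum_j W i j) - W.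

Definition weight_matrix N (W : 'M[R]_N) : Prop :=
  W^T = W /\ (forall i j, 0 <= W i j).

Definition selection_matrix m N (S : 'M[R]_(m, N)) : Prop :=
  exists sel : 'I_m -> 'I_N, injective sel /\
    forall i j, S i j = (j == sel i)%:R.

(* U (N x r) collects orthonormal eigenvectors of L associated with the
   r smallest eigenvalues lam_1 <= ... <= lam_r of L: there is a full
   orthonormal eigendecomposition L = V diag(mu) V^T with mu nondecreasing,
   U consists of the first r columns of V and lam of the first r entries of mu. *)
Definition reduced_fourier_basis N r (hle : (r <= N)%N) (L : 'M[R]_N)
  (U : 'M[R]_(N, r)) (lam : 'I_r -> R) : Prop :=
  exists (V : 'M[R]_N) (mu : 'I_N -> R),
    V^T *m V = 1%:M /\ L = V *m diag_mx (\row_i mu i) *m V^T /\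
    (forall i j : 'I_N, (i <= j)%N -> mu i <= mu j) /\
    (forall i (j : 'I_r), U i j = V i (widen_ord hle j)) /\
    (forall j : 'I_r, lam j = mu (widen_ord hle j)).

Definition mask_mx r (sigma : R) : 'M[R]_r :=
  \matrix_(i, j) expR (((i%:R - j%:R) ^+ 2) / sigma ^+ 2).

Definition problem3_obj ms mt Ns Nt r
  (Ss : 'M[R]_(ms, Ns)) (St : 'M[R]_(mt, Nt))
  (Us : 'M[R]_(Ns, r)) (Ut : 'M[R]_(Nt, r))
  (ys : 'cV[R]_ms) (yt : 'cV[R]_mt) (mu1 mu2 sigma : R)
  (as_ at_ : 'cV[R]_r) (T : 'M[R]_r) : R :=
  vnorm (Ss *m Us *m as_ - ys) ^+ 2 + vnorm (St *m Ut *m T *m at_ - yt) ^+ 2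
  + mu1 * vnorm (as_ - at_) ^+ 2
  + mu2 * frob2 (map2_mx (fun a b => a * b) (mask_mx r sigma) T).

Definition problem3_feasible r (T : 'M[R]_r) : Prop :=
  forall j, \sum_i (T i j) ^+ 2 = 1.

Definition problem3_solution ms mt Ns Nt r
  (Ss : 'M[R]_(ms, Ns)) (St : 'M[R]_(mt, Nt))
  (Us : 'M[R]_(Ns, r)) (Ut : 'M[R]_(Nt, r))
  (ys : 'cV[R]_ms) (yt : 'cV[R]_mt) (mu1 mu2 sigma : R)
  (as_ at_ : 'cV[R]_r) (T : 'M[R]_r) : Prop :=
  problem3_feasible T /\
  forall (bs bt : 'cV[R]_r) (T' : 'M[R]_r), problem3_feasible T' ->
    problem3_obj Ss St Us Ut ys yt mu1 mu2 sigma as_ at_ T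
    <= problem3_obj Ss St Us Ut ys yt mu1 mu2 sigma bs bt T'.

Definition lap_variation N (L : 'M[R]_N) (f : 'cV[R]_N) : R := (f^T *m L *m f) 0 0.

End Defs.

From HB Require Import structures.
From mathcomp Require Import all_boot all_order all_algebra.
From mathcomp Require Import all_classical all_reals all_analysis.
From mathcomp Require Import ring lra.
Set Implicit Arguments. Unset Strict Implicit. Unset Printing Implicit Defensive.
Import Order.TTheory GRing.Theory Num.Theory.
Local Open Scope ring_scope.
Local Open Scope classical_set_scope.

(* In the reduced Fourier bases both rates of variation are diagonal quadratic
   forms: f^T L f = sum_i lam_i alpha_i^2, since U^T L U = diag(lam).  Writing
   T alpha^t = alpha^t + e with e = (T - I) alpha^t, |e| <= Delta_T C, the
   difference of the two forms splits as
     sum (lam^s - lam^t) (alpha^s)^2 + sum lam^t (alpha^s - alpha^t)(alpha^s + alpha^t)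
     - 2 sum lam^t alpha^t e - sum lam^t e^2,
   and Cauchy-Schwarz with 0 <= lam^t_i <= lam_R (Laplacians are positive
   semidefinite) bounds the four terms by C^2 delta, 2 C lam_R Delta_alpha,
   2 C^2 lam_R Delta_T and C^2 lam_R Delta_T^2. *)

Section EuclideanNorm.
Variable R : realType.

Lemma cauchy_schwarz_sum (I : finType) (a b : I -> R) :
  (\sum_i a i * b i) ^+ 2 <= (\sum_i a i ^+ 2) * (\sum_i b i ^+ 2).
Proof.
set A := \sum_i a i ^+ 2; set B := \sum_i b i ^+ 2; set S := \sum_i a i * b i.
have lagrange : \sum_i \sum_j (a i * b j - a j * b i) ^+ 2 = A * B - 2 * (S * S) + B * A.
  rewrite /A /B /S !big_distrlr /= mulr_sumr -sumrB -big_split /=.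
  apply: eq_bigr => i _; rewrite mulr_sumr -sumrB -big_split /=.
  by apply: eq_bigr => j _; ring.
have : 0 <= \sum_i \sum_j (a i * b j - a j * b i) ^+ 2.
  by apply: sumr_ge0 => i _; apply: sumr_ge0 => j _; exact: sqr_ge0.
rewrite lagrange expr2; lra.
Qed.

Lemma vnorm_ge0 n (x : 'cV[R]_n) : 0 <= vnorm x.
Proof. exact: sqrtr_ge0. Qed.

Lemma vnorm_mul_le n (x y : 'cV[R]_n) (p q : R) :
  vnorm x <= p -> vnorm y <= q -> vnorm x * vnorm y <= p * q.
Proof. by apply: ler_pM; exact: vnorm_ge0. Qed.

Lemma vnorm_sqr n (x : 'cV[R]_n) : vnorm x ^+ 2 = \sum_i x i 0 ^+ 2.
Proof. by rewrite sqr_sqrtr // sumr_ge0 // => i _; exact: sqr_ge0. Qed.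

Lemma vnormZ n (k : R) (x : 'cV[R]_n) : vnorm (k *: x) = `|k| * vnorm x.
Proof.
rewrite /vnorm -sqrtr_sqr -sqrtrM ?sqr_ge0 // mulr_sumr.
by congr Num.sqrt; apply: eq_bigr => i _; rewrite mxE exprMn.
Qed.

Lemma sum_norm_mul_le_vnorm n (x y : 'cV[R]_n) :
  \sum_i `|x i 0| * `|y i 0| <= vnorm x * vnorm y.
Proof.
rewrite -(ler_pXn2r (n := 2)) ?nnegrE ?mulr_ge0 ?vnorm_ge0 ?sumr_ge0 //.
rewrite exprMn !vnorm_sqr.
under [X in _ <= X * _]eq_bigr do rewrite -real_normK ?num_real //.
under [X in _ <= _ * X]eq_bigr do rewrite -real_normK ?num_real //.
exact: cauchy_schwarz_sum.
Qed.

Lemma vnormD_le n (x y : 'cV[R]_n) : vnorm (x + y) <= vnorm x + vnorm y.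
Proof.
rewrite -(ler_pXn2r (n := 2)) ?nnegrE ?addr_ge0 ?vnorm_ge0 //.
have cross : \sum_i x i 0 * y i 0 <= vnorm x * vnorm y.
  apply: le_trans (sum_norm_mul_le_vnorm x y); apply: ler_sum => i _.
  by rewrite -normrM real_ler_norm ?num_real.
have -> : vnorm (x + y) ^+ 2 =
    vnorm x ^+ 2 + 2 * \sum_i x i 0 * y i 0 + vnorm y ^+ 2.
  rewrite !vnorm_sqr mulr_sumr -!big_split /=.
  by apply: eq_bigr => i _; rewrite mxE; ring.
lra.
Qed.

Definition wdot n (l : 'I_n -> R) (x y : 'cV[R]_n) : R := \sum_i l i * x i 0 * y i 0.

Lemma norm_wdot_le n (l : 'I_n -> R) (c : R) (x y : 'cV[R]_n) :
  0 <= c -> (forall i, `|l i| <= c) -> `|wdot l x y| <= c * (vnorm x * vnorm y).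
Proof.
move=> c_ge0 l_le; apply: le_trans (ler_norm_sum _ _ _) _.
apply: le_trans (ler_wpM2l c_ge0 (sum_norm_mul_le_vnorm x y)).
rewrite mulr_sumr; apply: ler_sum => i _.
by rewrite !normrM -mulrA ler_wpM2r ?mulr_ge0.
Qed.

Lemma mulmx_diag_wdot n (l : 'I_n -> R) (x y : 'cV[R]_n) :
  (x^T *m diag_mx (\row_i l i) *m y) 0 0 = wdot l x y.
Proof.
by rewrite mul_mx_diag mxE; apply: eq_bigr => i _; rewrite !mxE [x i 0 * _]mulrC.
Qed.

Lemma vnorm_mulmx_le_frob m n (E : 'M[R]_(m, n)) (x : 'cV[R]_n) :
  vnorm (E *m x) <= Num.sqrt (frob2 E) * vnorm x.
Proof.
have frob2_ge0 : 0 <= frob2 E by do 2!apply: sumr_ge0 => ? _; exact: sqr_ge0.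
rewrite -sqrtrM // ler_sqrt; last by rewrite mulr_ge0 // -vnorm_sqr sqr_ge0.
rewrite /frob2 mulr_suml; apply: ler_sum => i _; rewrite mxE.
exact: cauchy_schwarz_sum.
Qed.

Lemma opnorm_has_sup m n (E : 'M[R]_(m, n)) :
  has_sup [set vnorm (E *m x) | x in [set x : 'cV[R]_n | vnorm x <= 1]].
Proof.
split.
  exists (vnorm (E *m 0)), 0 => //=.
  by rewrite /vnorm big1 ?sqrtr0 // => i _; rewrite mxE expr0n.
exists (Num.sqrt (frob2 E)) => _ [x /= x_le1 <-].
apply: le_trans (vnorm_mulmx_le_frob E x) _.
by rewrite ler_piMr ?sqrtr_ge0.
Qed.

Lemma vnorm_mulmx_le_opnorm m n (E : 'M[R]_(m, n)) (x : 'cV[R]_n) :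
  vnorm (E *m x) <= opnorm E * vnorm x.
Proof.
have [x0|x_neq0] := eqVneq (vnorm x) 0.
  by have := vnorm_mulmx_le_frob E x; rewrite x0 !mulr0.
have x_gt0 : 0 < vnorm x by rewrite lt0r x_neq0 vnorm_ge0.
have unit_x : vnorm ((vnorm x)^-1 *: x) <= 1.
  by rewrite vnormZ ger0_norm ?invr_ge0 ?vnorm_ge0 // mulVf.
have : vnorm (E *m ((vnorm x)^-1 *: x)) <= opnorm E.
  by apply: (sup_upper_bound (opnorm_has_sup E)); exists ((vnorm x)^-1 *: x).
rewrite -scalemxAr vnormZ ger0_norm ?invr_ge0 ?vnorm_ge0 //.
by rewrite ler_pdivrMl // mulrC.
Qed.
End EuclideanNorm.

Section Laplacian.
Variables (R : realType) (N : nat) (W : 'M[R]_N).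

Lemma lap_variation_laplacian (x : 'cV[R]_N) : W^T = W ->
  lap_variation (laplacian W) x *+ 2 = \sum_i \sum_j W i j * (x i 0 - x j 0) ^+ 2.
Proof.
move=> symW.
have W_form : (x^T *m W *m x) 0 0 = \sum_i \sum_j W i j * x i 0 * x j 0.
  rewrite mxE; under eq_bigr do rewrite mxE mulr_suml.
  rewrite exchange_big; apply: eq_bigr => i _; apply: eq_bigr => j _; rewrite !mxE; ring.
(* By symmetry of W, both squares contribute the degree term. *)
have degree_sym : \sum_i \sum_j W i j * x j 0 ^+ 2 = \sum_i \sum_j W i j * x i 0 ^+ 2.
  rewrite exchange_big; apply: eq_bigr => i _; apply: eq_bigr => j _.
  by rewrite -{1}symW mxE.
set Dx := \sum_i \sum_j W i j * x i 0 ^+ 2; set Wx := \sum_i \sum_j W i j * x i 0 * x j 0.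
have -> : \sum_i \sum_j W i j * (x i 0 - x j 0) ^+ 2
    = Dx - Wx *+ 2 + \sum_i \sum_j W i j * x j 0 ^+ 2.
  rewrite -sumrMnl -sumrB -big_split; apply: eq_bigr => i _ /=.
  by rewrite -sumrMnl -sumrB -big_split; apply: eq_bigr => j _ /=; ring.
have -> : lap_variation (laplacian W) x = Dx - Wx.
  rewrite /lap_variation /laplacian mulmxBr mulmxBl mxE mulmx_diag_wdot.
  rewrite [in X in _ + X = _]mxE W_form; congr (_ - _); apply: eq_bigr => i _.
  by rewrite -mulrA -expr2 mulr_suml.
by rewrite degree_sym -/Dx; ring.
Qed.

Lemma lap_variation_laplacian_ge0 (x : 'cV[R]_N) :
  weight_matrix W -> 0 <= lap_variation (laplacian W) x.
Proof.
case=> symW W_ge0; rewrite -(pmulrn_lge0 _ (ltn0Sn 1)) lap_variation_laplacian //.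
by do 2!apply: sumr_ge0 => ? _; rewrite mulr_ge0 ?sqr_ge0.
Qed.
End Laplacian.

Section ReducedFourierBasis.
Variables (R : realType) (N r : nat) (hle : (r <= N)%N) (L : 'M[R]_N).
Variables (U : 'M[R]_(N, r)) (lam : 'I_r -> R).
Hypothesis basisU : reduced_fourier_basis hle L U lam.

Lemma fourier_basis_diagonalizes : U^T *m L *m U = diag_mx (\row_j lam j).
Proof.
have [V [mu [VtV [-> [_ [UV lamE]]]]]] := basisU.
have UtV : U^T *m V = \matrix_(j, i) (widen_ord hle j == i)%:R.
  apply/matrixP => j i; have := congr1 (fun M : 'M[R]_N => M (widen_ord hle j) i) VtV.
  by rewrite !mxE => <-; apply: eq_bigr => k _; rewrite !mxE UV.
have VtU : V^T *m U = (U^T *m V)^T by rewrite trmx_mul trmxK.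
rewrite !mulmxA UtV -mulmxA VtU UtV.
apply/matrixP => j k; rewrite mul_mx_diag !mxE (bigD1 (widen_ord hle j)) //=.
rewrite big1 => [|i /negbTE ji]; last by rewrite !mxE [_ == i]eq_sym ji !mul0r.
rewrite !mxE eqxx -val_eqE /= val_eqE lamE [k == j]eq_sym.
by case: eqP => _ /=; ring.
Qed.

Lemma lap_variation_fourier (a : 'cV[R]_r) : lap_variation L (U *m a) = wdot lam a a.
Proof.
by rewrite -mulmx_diag_wdot -fourier_basis_diagonalizes /lap_variation trmx_mul !mulmxA.
Qed.

Lemma fourier_eigenvalue_ge0 :
  (forall x, 0 <= lap_variation L x) -> forall j, 0 <= lam j.
Proof.
move=> L_psd j; have := L_psd (U *m delta_mx j 0).
rewrite lap_variation_fourier /wdot (bigD1 j) //= big1 => [|k /negbTE kj].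
  by rewrite !mxE eqxx !mulr1 addr0.
by rewrite !mxE kj !mulr0.
Qed.

Lemma fourier_eigenvalue_homo : {homo lam : j k / (j <= k)%N >-> j <= k}.
Proof.
have [V [mu [_ [_ [mu_homo [_ lamE]]]]]] := basisU.
by move=> j k jk; rewrite !lamE; apply: mu_homo.
Qed.
End ReducedFourierBasis.

Section VariationGap.
Variables (R : realType) (n : nat).
Implicit Types (ls lt : 'I_n -> R) (a b e : 'cV[R]_n).

Lemma wdot_gap_decomposition ls lt a b e :
  wdot ls a a - wdot lt (b + e) (b + e) =
  wdot (fun i => ls i - lt i) a a + wdot lt (a - b) (a + b)
  - 2 * wdot lt b e - wdot lt e e.
Proof.
rewrite /wdot mulr_sumr -!sumrB -big_split /= -!sumrB.
by apply: eq_bigr => i _; rewrite !mxE; ring.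
Qed.

Lemma wdot_gap_le ls lt a b e (lamR delta DT Da C : R) :
  0 <= lamR -> 0 <= delta -> 0 <= DT ->
  (forall i, `|lt i| <= lamR) -> (forall i, `|ls i - lt i| <= delta) ->
  vnorm (a - b) <= Da -> vnorm e <= DT * C -> vnorm a <= C -> vnorm b <= C ->
  `|wdot ls a a - wdot lt (b + e) (b + e)|
  <= C ^+ 2 * delta + 2 * C * lamR * Da + C ^+ 2 * lamR * (2 * DT + DT ^+ 2).
Proof.
move=> lamR_ge0 delta_ge0 DT_ge0 lt_le gap_le ab_le e_le a_le b_le.
have C_ge0 : 0 <= C := le_trans (vnorm_ge0 a) a_le.
have apb_le : vnorm (a + b) <= 2 * C.
  by apply: le_trans (vnormD_le a b) _; rewrite mulr2n mulrDl mul1r lerD.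
have bound_aa := le_trans (norm_wdot_le a a delta_ge0 gap_le)
  (ler_wpM2l delta_ge0 (vnorm_mul_le a_le a_le)).
have bound_ab := le_trans (norm_wdot_le (a - b) (a + b) lamR_ge0 lt_le)
  (ler_wpM2l lamR_ge0 (vnorm_mul_le ab_le apb_le)).
have bound_be := le_trans (norm_wdot_le b e lamR_ge0 lt_le)
  (ler_wpM2l lamR_ge0 (vnorm_mul_le b_le e_le)).
have bound_ee := le_trans (norm_wdot_le e e lamR_ge0 lt_le)
  (ler_wpM2l lamR_ge0 (vnorm_mul_le e_le e_le)).
move: bound_aa bound_ab bound_be bound_ee.
rewrite wdot_gap_decomposition !ler_norml => /andP[? ?] /andP[? ?] /andP[? ?] /andP[? ?].
apply/andP; split; lra.
Qed.
End VariationGap.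

Theorem proposition1 (K : realType) (Ns Nt ms mt r : nat)
  (hs : (r.+1 < Ns)%N) (ht : (r.+1 < Nt)%N)
  (Ws : 'M[K]_Ns) (Wt : 'M[K]_Nt)
  (Us : 'M[K]_(Ns, r.+1)) (Ut : 'M[K]_(Nt, r.+1))
  (lams lamt : 'I_r.+1 -> K)
  (Ss : 'M[K]_(ms, Ns)) (St : 'M[K]_(mt, Nt))
  (ys : 'cV[K]_ms) (yt : 'cV[K]_mt)
  (mu1 mu2 sigma : K)
  (as_ at_ : 'cV[K]_r.+1) (T : 'M[K]_r.+1)
  (lamR delta DeltaT Deltaa C : K) :
  weight_matrix Ws -> weight_matrix Wt ->
  reduced_fourier_basis (ltnW hs) (laplacian Ws) Us lams ->
  reduced_fourier_basis (ltnW ht) (laplacian Wt) Ut lamt ->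
  selection_matrix Ss -> selection_matrix St ->
  0 < mu1 -> 0 < mu2 -> 0 < sigma ->
  problem3_solution Ss St Us Ut ys yt mu1 mu2 sigma as_ at_ T ->
  0 < lamR -> 0 <= delta -> 0 <= DeltaT -> 0 <= Deltaa -> 0 < C ->
  (forall i, `|lams i - lamt i| <= delta) ->
  lamR = Num.max (lams ord_max) (lamt ord_max) ->
  vnorm (as_ - at_) <= Deltaa ->
  opnorm (T - 1%:M) <= DeltaT ->
  vnorm as_ <= C -> vnorm at_ <= C ->
  `| lap_variation (laplacian Ws) (Us *m as_)
     - lap_variation (laplacian Wt) (Ut *m T *m at_) |
  <= C ^+ 2 * delta + 2 * C * lamR * Deltaa
     + C ^+ 2 * lamR * (2 * DeltaT + DeltaT ^+ 2).
Proof.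
move=> weightWs weightWt basisUs basisUt _ _ _ _ _ _ lamR_gt0 delta_ge0 DT_ge0 _ _
  lam_gap lamR_max a_gap T_near as_le at_le.
have lamt_le i : `|lamt i| <= lamR.
  have lamt_ge0 := fourier_eigenvalue_ge0 basisUt
    (fun x => lap_variation_laplacian_ge0 x weightWt).
  have lamt_le_max := fourier_eigenvalue_homo basisUt (leq_ord i : i <= ord_max)%N.
  rewrite ger0_norm //; apply: le_trans lamt_le_max _.
  by rewrite lamR_max le_max lexx orbT.
have T_split : T *m at_ = at_ + (T - 1%:M) *m at_ by rewrite mulmxBl mul1mx addrC subrK.
have e_le : vnorm ((T - 1%:M) *m at_) <= DeltaT * C.
  apply: le_trans (vnorm_mulmx_le_opnorm _ _) _.
  exact: le_trans (ler_wpM2r (vnorm_ge0 _) T_near) (ler_wpM2l DT_ge0 at_le).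
rewrite (lap_variation_fourier basisUs) -mulmxA (lap_variation_fourier basisUt) T_split.
exact: wdot_gap_le (ltW lamR_gt0) delta_ge0 DT_ge0 lamt_le lam_gap a_gap e_le as_le at_le.
Qed.
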